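(* Let $\mu>0$, $x>0$, $y>0$, and let $n,q\ge 0$ be integers. Then $$\sum_{k=0}^{n}F_{\mu+k}(x,y)<P_{\mu}(x,y),$$ and, provided $F_{\mu+n+1}(x,y)>F_{\mu+n+q+2}(x,y)$, $$P_\mu(x,y)<\sum_{k=0}^{n}F_{\mu+k}(x,y)+U^{(q)}_{\mu+n+1}(x,y),$$ where $U_{\nu}^{(q)}(x,y)=\dfrac{\sum_{k=0}^q F_{\nu+k}(x,y)}{F_\nu(x,y)-F_{\nu+q+1}(x,y)}F_{\nu}(x,y)$.
   Context: $P_{\mu}(x,y)=x^{\frac12(1-\mu)}\int_0^{y} t^{\frac12(\mu-1)}e^{-t-x}I_{\mu-1}(2\sqrt{xt})\,dt$ for $\mu>0$, with $I_\nu$ the modified Bessel function of the first kind; $F_{\mu}(x,y)=(y/x)^{\mu/2}e^{-x-y}I_{\mu}(2\sqrt{xy})$. *)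

From Stdlib Require Import Reals.
From Coquelicot Require Import Coquelicot.
Open Scope R_scope.

Definition Gamma (s : R) : R :=
  RInt_gen (fun t => Rpower t (s - 1) * exp (- t)) (at_right 0) (Rbar_locally p_infty).

Definition BesselI (nu z : R) : R :=
  Series (fun k : nat => Rpower (z / 2) (2 * INR k + nu) / (INR (Factorial.fact k) * Gamma (INR k + nu + 1))).

Definition Fmu (mu x y : R) : R :=
  Rpower (y / x) (mu / 2) * exp (- x - y) * BesselI mu (2 * sqrt (x * y)).

(* P_mu(x,y) = x^((1-mu)/2) int_0^y t^((mu-1)/2) e^(-t-x) I_(mu-1)(2 sqrt(x t)) dt
   (improper at 0 since the integrand may be singular there when mu < 1). *)
Definition Pmu (mu x y : R) : R :=
  Rpower x ((1 - mu) / 2) *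
  RInt_gen (fun t => Rpower t ((mu - 1) / 2) * exp (- t - x) * BesselI (mu - 1) (2 * sqrt (x * t)))
           (at_right 0) (at_point y).

Definition Uq (q : nat) (nu x y : R) : R :=
  sum_f_R0 (fun k => Fmu (nu + INR k) x y) q / (Fmu nu x y - Fmu (nu + INR q + 1) x y) * Fmu nu x y.

From Stdlib Require Import Reals Lra Lia Classical.
From Coquelicot Require Import Coquelicot.
Open Scope R_scope.

(* Expanding the Bessel function gives
     F_l(x, y) = e^(-x-y) y^l sum_k x^k y^k / (k! Gamma(k + l + 1)),
   and collecting the powers of y in sum_(j >= 0) F_(l+j) gives
     S_l(x, y) = e^(-x-y) y^l sum_m e_m(x) y^m / Gamma(m + l + 1),
   where e_m(x) = sum_(k <= m) x^k / k!.  S_l is an antiderivative in y of the integrand of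
   P_l that vanishes at 0+, hence P_l = S_l and P_l = F_l + P_(l+1); iterating, P_mu is the
   sum of its first n+1 terms F_(mu+k) plus the positive tail P_(mu+n+1).
   For the upper bound, S_l / F_l is strictly decreasing in l: the coefficients of the power
   series of S_l F_(l+1) - S_(l+1) F_l are symmetrised sums of
   (i - j) (e_i x^j / j! - e_j x^i / i!) >= 0, since e_r r! / x^r increases with r.
   Comparing nu = mu + n + 1 with nu + q + 1, where S_nu = sum_(k <= q) F_(nu+k) + S_(nu+q+1),
   and clearing denominators gives S_nu < U^(q)_nu. *)

(** * Improper integrals on (0, oo) *)

Lemma lub_approx (E : R -> Prop) (L : R) (eps : posreal) :
  is_lub E L -> exists y, E y /\ L - eps < y.
Proof.
  intros [HL1 HL2]. apply NNPP. intros Hn.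
  assert (Hu : is_upper_bound E (L - eps)).
  { intros y Hy. apply Rnot_lt_le. intros Hlt. apply Hn. exists y; auto. }
  specialize (HL2 _ Hu). destruct eps; simpl in *; lra.
Qed.

Lemma monotone_bounded_lim_p_infty (g : R -> R) (M : R) :
  (forall a b, 0 < a -> a <= b -> g a <= g b) -> (forall t, 0 < t -> g t <= M) ->
  exists L, filterlim g (Rbar_locally p_infty) (locally L) /\ (forall t, 0 < t -> g t <= L).
Proof.
  intros Hg HM.
  set (E := fun z => exists t, 0 < t /\ z = g t).
  assert (HE : bound E) by (exists M; intros z [t [Ht ->]]; auto).
  assert (HE0 : exists z, E z) by (exists (g 1); exists 1; split; [lra | auto]).
  destruct (completeness E HE HE0) as [L HL].
  assert (Hub : forall t, 0 < t -> g t <= L) by (intros t Ht; apply HL; exists t; auto).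
  exists L; split; [| exact Hub].
  apply filterlim_locally. intros eps.
  destruct (lub_approx E L eps HL) as [z [[t0 [Ht0 ->]] Hz]].
  exists t0. intros t Ht. change (Rabs (g t - L) < eps). apply Rabs_lt_between.
  pose proof (Hg t0 t Ht0 ltac:(lra)). pose proof (Hub t ltac:(lra)). lra.
Qed.

Lemma monotone_bounded_lim_at_right_0 (g : R -> R) (m : R) :
  (forall a b, 0 < a -> a <= b -> g a <= g b) -> (forall t, 0 < t -> m <= g t) ->
  exists L, filterlim g (at_right 0) (locally L) /\ (forall t, 0 < t -> L <= g t).
Proof.
  intros Hg Hm.
  set (E := fun z => exists t, 0 < t /\ z = - g t).
  assert (HE : bound E) by (exists (- m); intros z [t [Ht ->]]; specialize (Hm t Ht); lra).
  assert (HE0 : exists z, E z) by (exists (- g 1); exists 1; split; [lra | auto]).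
  destruct (completeness E HE HE0) as [L HL].
  assert (Hlb : forall t, 0 < t -> - L <= g t).
  { intros t Ht. assert (- g t <= L) by (apply HL; exists t; auto). lra. }
  exists (- L); split; [| exact Hlb].
  apply filterlim_locally. intros eps.
  destruct (lub_approx E L eps HL) as [z [[t0 [Ht0 ->]] Hz]].
  exists (mkposreal t0 Ht0). intros t Ht Htpos.
  change (Rabs (t - 0) < t0) in Ht. change (Rabs (g t - - L) < eps).
  apply Rabs_lt_between in Ht. apply Rabs_lt_between.
  pose proof (Hg t t0 Htpos ltac:(lra)). pose proof (Hlb t Htpos). lra.
Qed.

Lemma filter_prod_at_right_0 (Fb : (R -> Prop) -> Prop) (P : R * R -> Prop) :
  Fb (fun b => 0 < b) -> (forall a b, 0 < a -> 0 < b -> P (a, b)) ->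
  filter_prod (at_right 0) Fb P.
Proof.
  intros HFb HP. apply (Filter_prod _ _ _ (fun a => 0 < a) (fun b => 0 < b)); auto.
  exists (mkposreal 1 Rlt_0_1). intros y _ Hy. exact Hy.
Qed.

Lemma is_RInt_gen_primitive (F f : R -> R) (Fb : (R -> Prop) -> Prop) {FFb : Filter Fb}
    (la lb : R) :
  Fb (fun b => 0 < b) ->
  (forall t, 0 < t -> is_derive F t (f t)) -> (forall t, 0 < t -> continuous f t) ->
  filterlim F (at_right 0) (locally la) -> filterlim F Fb (locally lb) ->
  is_RInt_gen f (at_right 0) Fb (lb - la).
Proof.
  intros HFb HF Hf Hla Hlb.
  assert (Hpos : forall a b x, 0 < a -> 0 < b -> Rmin a b <= x -> 0 < x).
  { intros a b x Ha Hb Hx. pose proof (Rmin_pos a b Ha Hb). lra. }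
  apply (is_RInt_gen_ext (Derive F)).
  { apply filter_prod_at_right_0; auto. intros a b Ha Hb x Hx; simpl in Hx.
    apply is_derive_unique, HF, (Hpos a b); lra. }
  apply is_RInt_gen_Derive; auto.
  - apply filter_prod_at_right_0; auto. intros a b Ha Hb x Hx; simpl in Hx.
    eexists. apply HF, (Hpos a b); lra.
  - apply filter_prod_at_right_0; auto. intros a b Ha Hb x Hx; simpl in Hx.
    assert (Hx0 : 0 < x) by (apply (Hpos a b); lra).
    apply (continuous_ext_loc _ f); [| now apply Hf].
    assert (Hr : 0 < x / 2) by lra. exists (mkposreal _ Hr). intros z Hz.
    change (Rabs (z - x) < x / 2) in Hz. apply Rabs_lt_between in Hz.
    symmetry. apply is_derive_unique, HF. lra.
Qed.

Section NonnegativeIntegrand.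

Variable f : R -> R.
Hypothesis f_cont : forall t, 0 < t -> continuous f t.
Hypothesis f_ge0 : forall t, 0 < t -> 0 <= f t.

Lemma ex_RInt_pos (a b : R) : 0 < a -> 0 < b -> ex_RInt f a b.
Proof.
  intros Ha Hb. apply (ex_RInt_continuous (V := R_CompleteNormedModule)).
  intros z Hz. pose proof (Rmin_pos a b Ha Hb). apply f_cont. lra.
Qed.

Lemma RInt_Chasles_pos (a b c : R) :
  0 < a -> 0 < b -> 0 < c -> RInt f a c = RInt f a b + RInt f b c.
Proof.
  intros Ha Hb Hc. rewrite <- (RInt_Chasles f a b c) by (apply ex_RInt_pos; auto).
  reflexivity.
Qed.

Lemma RInt_le_extend (a b c : R) : 0 < a -> 0 < b -> b <= c -> RInt f a b <= RInt f a c.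
Proof.
  intros Ha Hb Hbc. rewrite (RInt_Chasles_pos a b c) by lra.
  assert (0 <= RInt f b c); [| lra].
  apply RInt_ge_0; auto; [apply ex_RInt_pos; lra | intros z Hz; apply f_ge0; lra].
Qed.

Lemma ex_RInt_gen_0_p_infty (m M : R) :
  (forall t, 0 < t -> t <= 1 -> m <= RInt f 1 t) -> (forall t, 1 <= t -> RInt f 1 t <= M) ->
  exists L, is_RInt_gen f (at_right 0) (Rbar_locally p_infty) L /\
            (forall a b, 0 < a -> a <= b -> RInt f a b <= L).
Proof.
  intros Hm HM.
  set (G := fun t => RInt f 1 t).
  assert (HG : forall a b, 0 < a -> 0 < b -> RInt f a b = G b - G a).
  { intros a b Ha Hb. unfold G. rewrite (RInt_Chasles_pos 1 a b) by lra. lra. }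
  assert (HGmon : forall a b, 0 < a -> a <= b -> G a <= G b).
  { intros a b Ha Hab. apply RInt_le_extend; lra. }
  assert (HGub : forall t, 0 < t -> G t <= M).
  { intros t Ht. pose proof (HGmon t (Rmax t 1) Ht (Rmax_l t 1)).
    pose proof (HM (Rmax t 1) (Rmax_r t 1)). unfold G in *. lra. }
  assert (HGlb : forall t, 0 < t -> m <= G t).
  { intros t Ht. assert (0 < Rmin t 1) by (apply Rmin_pos; lra).
    pose proof (HGmon (Rmin t 1) t ltac:(lra) (Rmin_l t 1)).
    pose proof (Hm (Rmin t 1) ltac:(lra) (Rmin_r t 1)). unfold G in *. lra. }
  destruct (monotone_bounded_lim_p_infty G M HGmon HGub) as [Li [HLi HLi']].
  destruct (monotone_bounded_lim_at_right_0 G m HGmon HGlb) as [L0 [HL0 HL0']].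
  exists (Li - L0). split.
  - apply (is_RInt_gen_primitive G f (Rbar_locally p_infty)); auto.
    + exists 0. auto.
    + intros t Ht. apply (is_derive_RInt f G 1); [| now apply f_cont].
      assert (Hr : 0 < t / 2) by lra. exists (mkposreal _ Hr). intros z Hz.
      change (Rabs (z - t) < t / 2) in Hz. apply Rabs_lt_between in Hz.
      apply (RInt_correct (V := R_CompleteNormedModule)), ex_RInt_pos; lra.
  - intros a b Ha Hab. rewrite HG by lra.
    pose proof (HLi' b ltac:(lra)). pose proof (HL0' a Ha). lra.
Qed.

End NonnegativeIntegrand.

Lemma Rpower_pos (t a : R) : 0 < Rpower t a.
Proof. apply exp_pos. Qed.

Lemma is_derive_Rpower (a t : R) :
  0 < t -> is_derive (fun u => Rpower u a) t (a * Rpower t (a - 1)).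
Proof. intros Ht. apply is_derive_Reals, derivable_pt_lim_power, Ht. Qed.

Lemma continuous_Rpower (a t : R) : 0 < t -> continuous (fun u => Rpower u a) t.
Proof.
  intros Ht. apply (ex_derive_continuous (fun u => Rpower u a)).
  eexists. now apply is_derive_Rpower.
Qed.

Lemma is_derive_exp_opp (t : R) : is_derive (fun u => exp (- u)) t (- exp (- t)).
Proof. auto_derive; auto; ring. Qed.

Lemma continuous_exp_opp (t : R) : continuous (fun u => exp (- u)) t.
Proof. apply (ex_derive_continuous (fun u => exp (- u))). eexists. apply is_derive_exp_opp. Qed.

Lemma exp_opp_lt_1 (t : R) : 0 < t -> exp (- t) < 1.
Proof. intros Ht. rewrite <- exp_0. apply exp_increasing. lra. Qed.

Lemma is_derive_mult_R (f g : R -> R) (t df dg : R) :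
  is_derive f t df -> is_derive g t dg -> is_derive (fun u => f u * g u) t (df * g t + f t * dg).
Proof.
  intros Hf Hg. apply is_derive_Reals.
  apply (derivable_pt_lim_mult f g t df dg); now apply is_derive_Reals.
Qed.

Lemma lim_Rpower_at_right_0 (s : R) :
  0 < s -> filterlim (fun t => Rpower t s) (at_right 0) (locally 0).
Proof.
  intros Hs. unfold Rpower.
  apply (filterlim_comp _ _ _ (fun t => s * ln t) exp _ (Rbar_locally m_infty));
    [| exact is_lim_exp_m].
  apply (filterlim_comp _ _ _ ln (fun y => s * y) _ (Rbar_locally m_infty));
    [exact is_lim_ln_0 |].
  pose proof (is_lim_scal_l (fun y => y) s m_infty m_infty (is_lim_id m_infty)) as H.
  simpl in H. unfold is_lim in H. revert H. case Rle_dec; intros H1; [| lra].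
  case Rle_lt_or_eq_dec; intros H2 H; [exact H | lra].
Qed.

Lemma lim_Rpower_exp_p_infty (s : R) :
  filterlim (fun t => Rpower t s * exp (- t)) (Rbar_locally p_infty) (locally 0).
Proof.
  apply (filterlim_ext_loc (fun t => exp (t * (s * (ln t / t) - 1)))).
  { exists 0. intros t Ht. unfold Rpower. rewrite <- exp_plus. f_equal. field. lra. }
  apply (filterlim_comp _ _ _ _ exp _ (Rbar_locally m_infty)); [| exact is_lim_exp_m].
  assert (H : is_lim (fun t => t * (s * (ln t / t) - 1)) p_infty (Rbar_mult p_infty (-1))).
  { apply is_lim_mult; [apply is_lim_id | | simpl; lra].
    replace (Finite (-1)) with (Finite (s * 0 - 1)) by (f_equal; ring).
    apply is_lim_minus'; [| apply is_lim_const].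
    exact (is_lim_scal_l _ s p_infty 0 is_lim_div_ln_p). }
  simpl in H. revert H. destruct (Rle_dec 0 (-1)) as [H1 | H1]; [exfalso; lra |]. intros H. exact H.
Qed.

Lemma lim_Rpower_exp_at_right_0 (s : R) :
  0 < s -> filterlim (fun t => Rpower t s * exp (- t)) (at_right 0) (locally 0).
Proof.
  intros Hs. apply filterlim_locally. intros eps.
  destruct (proj1 (filterlim_locally _ _) (lim_Rpower_at_right_0 s Hs) eps) as [d Hd].
  exists d. intros t Ht Ht0. specialize (Hd t Ht Ht0).
  change (Rabs (Rpower t s - 0) < eps) in Hd. change (Rabs (Rpower t s * exp (- t) - 0) < eps).
  rewrite Rminus_0_r in *. pose proof (Rpower_pos t s). pose proof (exp_pos (- t)).
  pose proof (exp_opp_lt_1 t Ht0). rewrite Rabs_pos_eq in * by nra. nra.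
Qed.

(** * The Gamma function *)

Definition Gamma_integrand (s t : R) : R := Rpower t (s - 1) * exp (- t).

Lemma Gamma_integrand_pos (s t : R) : 0 < Gamma_integrand s t.
Proof. apply Rmult_lt_0_compat; [apply Rpower_pos | apply exp_pos]. Qed.

Lemma continuous_Gamma_integrand (s t : R) : 0 < t -> continuous (Gamma_integrand s) t.
Proof.
  intros Ht. apply (continuous_mult (fun u => Rpower u (s - 1)) (fun u => exp (- u))).
  - now apply continuous_Rpower.
  - apply continuous_exp_opp.
Qed.

(* The tail is dominated by [1 / u^2] beyond the point where [u^(s+1) e^-u < 1]. *)
Lemma RInt_Gamma_integrand_ub (s : R) :
  exists M, forall t, 1 <= t -> RInt (Gamma_integrand s) 1 t <= M.
Proof.
  set (f := Gamma_integrand s).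
  assert (Hc : forall t, 0 < t -> continuous f t) by apply continuous_Gamma_integrand.
  assert (Hp : forall t, 0 < t -> 0 <= f t) by (intros; left; apply Gamma_integrand_pos).
  destruct (proj1 (filterlim_locally _ _) (lim_Rpower_exp_p_infty (s + 1)) (mkposreal 1 Rlt_0_1))
    as [T0 HT0].
  set (T := Rmax T0 1 + 1).
  assert (HT1 : 1 < T) by (unfold T; pose proof (Rmax_r T0 1); lra).
  assert (HT0T : T0 < T) by (unfold T; pose proof (Rmax_l T0 1); lra).
  exists (RInt f 1 T + 1). intros t Ht.
  destruct (Rle_lt_dec t T) as [Hle | Hlt].
  { pose proof (RInt_le_extend f Hc Hp 1 t T). lra. }
  rewrite (RInt_Chasles_pos f Hc 1 T t) by lra.
  assert (Hi : is_RInt (fun u => / u ^ 2) T t (/ T - / t)).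
  { replace (/ T - / t) with (minus (- / t) (- / T)) by (unfold minus, plus, opp; simpl; ring).
    apply (is_RInt_derive (fun u => - / u)).
    - intros u Hu. pose proof (Rmin_pos T t ltac:(lra) ltac:(lra)).
      auto_derive; [lra | field; lra].
    - intros u Hu. pose proof (Rmin_pos T t ltac:(lra) ltac:(lra)).
      apply (ex_derive_continuous (fun u => / u ^ 2)). auto_derive. intros Hc0; nra. }
  assert (Hle : RInt f T t <= / T - / t).
  { rewrite <- (is_RInt_unique _ _ _ _ Hi). apply RInt_le; [lra | apply ex_RInt_pos; auto; lra |
      eexists; exact Hi |].
    intros u Hu. specialize (HT0 u ltac:(lra)).
    change (Rabs (Rpower u (s + 1) * exp (- u) - 0) < 1) in HT0.
    rewrite Rminus_0_r, Rabs_pos_eq in HT0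
      by (left; apply Rmult_lt_0_compat; [apply Rpower_pos | apply exp_pos]).
    unfold f, Gamma_integrand.
    replace (s + 1) with ((s - 1) + INR 2) in HT0 by (simpl; ring).
    rewrite Rpower_plus, Rpower_pow in HT0 by lra.
    apply (Rmult_le_reg_r (u ^ 2)); [apply pow_lt; lra |].
    rewrite Rinv_l by (apply pow_nonzero; lra). nra. }
  assert (0 < / t) by (apply Rinv_0_lt_compat; lra).
  assert (/ T < 1) by (rewrite <- Rinv_1; apply Rinv_lt_contravar; lra). lra.
Qed.

(* Near 0 the integrand is at most [u^(s-1)], whose integral over [t, 1] is below [1 / s]. *)
Lemma RInt_Gamma_integrand_lb (s : R) :
  0 < s -> forall t, 0 < t -> t <= 1 -> - / s <= RInt (Gamma_integrand s) 1 t.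
Proof.
  intros Hs t Ht Ht1. set (f := Gamma_integrand s).
  assert (Hi : is_RInt (fun u => Rpower u (s - 1)) t 1 (/ s - / s * Rpower t s)).
  { replace (/ s - / s * Rpower t s) with (minus (/ s * Rpower 1 s) (/ s * Rpower t s))
      by (unfold minus, plus, opp, Rpower; simpl; rewrite ln_1, Rmult_0_r, exp_0; ring).
    apply (is_RInt_derive (fun u => / s * Rpower u s)).
    - intros u Hu. pose proof (Rmin_pos t 1 Ht Rlt_0_1).
      replace (Rpower u (s - 1)) with (/ s * (s * Rpower u (s - 1))) by (field; lra).
      apply is_derive_scal, is_derive_Rpower. lra.
    - intros u Hu. pose proof (Rmin_pos t 1 Ht Rlt_0_1). apply continuous_Rpower. lra. }
  assert (Hle : RInt f t 1 <= / s - / s * Rpower t s).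
  { rewrite <- (is_RInt_unique _ _ _ _ Hi).
    apply RInt_le; [lra | | eexists; exact Hi |].
    - apply (ex_RInt_pos f); [apply continuous_Gamma_integrand | lra | lra].
    - intros u Hu. unfold f, Gamma_integrand. pose proof (Rpower_pos u (s - 1)).
      pose proof (exp_opp_lt_1 u ltac:(lra)). nra. }
  rewrite <- (opp_RInt_swap (V := R_CompleteNormedModule))
    by (apply (ex_RInt_pos f); [apply continuous_Gamma_integrand | lra | lra]).
  change (opp ?u) with (- u).
  assert (0 < / s * Rpower t s)
    by (apply Rmult_lt_0_compat; [apply Rinv_0_lt_compat | apply Rpower_pos]; lra).
  lra.
Qed.

Lemma is_RInt_gen_Gamma (s : R) :
  0 < s -> is_RInt_gen (Gamma_integrand s) (at_right 0) (Rbar_locally p_infty) (Gamma s) /\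
           0 < Gamma s.
Proof.
  intros Hs.
  assert (Hc : forall t, 0 < t -> continuous (Gamma_integrand s) t)
    by apply continuous_Gamma_integrand.
  destruct (RInt_Gamma_integrand_ub s) as [M HM].
  destruct (ex_RInt_gen_0_p_infty (Gamma_integrand s) Hc
              (fun t _ => Rlt_le _ _ (Gamma_integrand_pos s t)) (- / s) M
              (RInt_Gamma_integrand_lb s Hs) HM) as [L [HL HLb]].
  replace (Gamma s) with L by (symmetry; exact (is_RInt_gen_unique _ _ HL)).
  split; [exact HL |].
  apply (Rlt_le_trans _ (RInt (Gamma_integrand s) (1 / 2) 2)); [| apply HLb; lra].
  apply RInt_gt_0; [lra | intros; apply Gamma_integrand_pos | intros t Ht; apply Hc; lra].
Qed.

Lemma Gamma_pos (s : R) : 0 < s -> 0 < Gamma s.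
Proof. intros Hs. apply (is_RInt_gen_Gamma s Hs). Qed.

(* Integration by parts, written as the integral of [d/dt (t^s e^-t)] over (0, oo). *)
Lemma Gamma_succ (s : R) : 0 < s -> Gamma (s + 1) = s * Gamma s.
Proof.
  intros Hs.
  set (h := fun t => s * Gamma_integrand s t - Gamma_integrand (s + 1) t).
  assert (Hh : is_RInt_gen h (at_right 0) (Rbar_locally p_infty) (0 - 0)).
  { apply (is_RInt_gen_primitive (fun t => Rpower t s * exp (- t)) h (Rbar_locally p_infty)).
    - exists 0. auto.
    - intros t Ht. unfold h, Gamma_integrand. replace (s + 1 - 1) with s by ring.
      replace (s * (Rpower t (s - 1) * exp (- t)) - Rpower t s * exp (- t))
        with (s * Rpower t (s - 1) * exp (- t) + Rpower t s * - exp (- t)) by ring.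
      apply (is_derive_mult_R (fun u => Rpower u s) (fun u => exp (- u)));
        [now apply is_derive_Rpower | apply is_derive_exp_opp].
    - intros t Ht. apply (continuous_minus (fun u => s * Gamma_integrand s u)).
      + apply (continuous_scal_r s (Gamma_integrand s)). now apply continuous_Gamma_integrand.
      + now apply continuous_Gamma_integrand.
    - now apply lim_Rpower_exp_at_right_0.
    - apply lim_Rpower_exp_p_infty. }
  pose proof (is_RInt_gen_scal _ s _ (proj1 (is_RInt_gen_Gamma s Hs))) as HsG.
  pose proof (is_RInt_gen_minus _ _ _ _ HsG Hh) as Hdiff.
  assert (H : is_RInt_gen (Gamma_integrand (s + 1)) (at_right 0) (Rbar_locally p_infty)
                (s * Gamma s)).
  { apply (is_RInt_gen_ext (fun t => minus (scal s (Gamma_integrand s t)) (h t))).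
    - apply filter_prod_at_right_0; [exists 0; auto |]. intros a b _ _ t _.
      unfold h, minus, plus, opp, scal; simpl; unfold mult; simpl. ring.
    - replace (s * Gamma s) with (minus (scal s (Gamma s)) (0 - 0)); [exact Hdiff |].
      unfold minus, plus, opp, scal; simpl; unfold mult; simpl. ring. }
  exact (is_RInt_gen_unique _ _ H).
Qed.

Lemma CV_radius_infinite_ratio (a : nat -> R) (C : R) :
  (forall n, 0 < a n) -> (forall n, a (S n) <= C / INR (S n) * a n) -> CV_radius a = p_infty.
Proof.
  intros Hpos Hratio. apply CV_radius_infinite_DAlembert; [intros n; specialize (Hpos n); lra |].
  apply (is_lim_seq_le_le (fun _ => 0) _ (fun n => C / INR (S n))).
  - intros n. specialize (Hratio n). pose proof (Hpos n). pose proof (Hpos (S n)).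
    rewrite Rabs_pos_eq by (left; apply Rdiv_lt_0_compat; auto).
    split; [left; apply Rdiv_lt_0_compat; auto |].
    apply (Rmult_le_reg_r (a n)); auto. unfold Rdiv at 1.
    rewrite Rmult_assoc, Rinv_l, Rmult_1_r by lra. exact Hratio.
  - apply is_lim_seq_const.
  - replace (Finite 0) with (Rbar_mult C 0) by (simpl; f_equal; ring).
    apply (is_lim_seq_scal_l (fun n => / INR (S n)) C 0).
    replace (Finite 0) with (Rbar_inv p_infty) by reflexivity.
    apply is_lim_seq_inv; [| discriminate].
    apply (is_lim_seq_incr_1 INR), is_lim_seq_INR.
Qed.

Lemma Rabs_lt_CV_radius_infinite (a : nat -> R) (t : R) :
  CV_radius a = p_infty -> Rbar_lt (Rabs t) (CV_radius a).
Proof. intros H; rewrite H; exact I. Qed.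

Lemma PSeries_partial_le (a : nat -> R) (y : R) (N : nat) :
  ex_pseries a y -> 0 <= y -> (forall n, 0 <= a n) ->
  sum_f_R0 (fun k => a k * y ^ k) N <= PSeries a y.
Proof.
  intros Hex Hy Ha.
  assert (Hlim : is_lim_seq (sum_n (fun k => scal (pow_n y k) (a k))) (PSeries a y))
    by exact (PSeries_correct a y Hex).
  assert (Hterm : forall k, scal (pow_n y k) (a k) = a k * y ^ k).
  { intros k. unfold scal; simpl; unfold mult; simpl. rewrite pow_n_pow. ring. }
  replace (sum_f_R0 (fun k => a k * y ^ k) N) with (sum_n (fun k => scal (pow_n y k) (a k)) N)
    by (rewrite sum_n_Reals; apply sum_eq; intros; apply Hterm).
  apply (is_lim_seq_incr_compare _ _ Hlim). intros n. rewrite sum_Sn.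
  assert (0 <= scal (pow_n y (S n)) (a (S n)))
    by (rewrite Hterm; apply Rmult_le_pos; auto; apply pow_le; auto).
  change (plus ?u ?v) with (u + v). lra.
Qed.

Lemma PSeries_pos (a : nat -> R) (y : R) :
  CV_radius a = p_infty -> 0 < y -> (forall n, 0 < a n) -> 0 < PSeries a y.
Proof.
  intros Ha Hy Hpos.
  apply (Rlt_le_trans _ (sum_f_R0 (fun k => a k * y ^ k) 0)).
  - simpl. specialize (Hpos 0%nat). lra.
  - apply PSeries_partial_le; [| lra | intros; left; auto].
    now apply CV_radius_inside, Rabs_lt_CV_radius_infinite.
Qed.

Lemma sum_antidiagonal_nonneg (phi : nat -> nat -> R) (N : nat) :
  (forall i j, 0 <= phi i j + phi j i) -> 0 <= sum_f_R0 (fun k => phi k (N - k)%nat) N.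
Proof.
  intros Hphi.
  assert (Hrev : sum_f_R0 (fun k => phi k (N - k)%nat) N = sum_f_R0 (fun k => phi (N - k)%nat k) N).
  { rewrite <- (sum_f_R0_skip (fun k => phi k (N - k)%nat)). apply sum_eq.
    intros i Hi. replace (N - (N - i))%nat with i by lia. reflexivity. }
  assert (0 <= sum_f_R0 (fun k => phi k (N - k)%nat + phi (N - k)%nat k) N)
    by (apply cond_pos_sum; auto).
  rewrite sum_plus in H. lra.
Qed.

(** * Series representations of F_mu and P_mu *)

Lemma INR_fact_pos (k : nat) : 0 < INR (Factorial.fact k).
Proof. apply lt_0_INR, Factorial.lt_O_fact. Qed.

Lemma Gamma_shift (l : R) (k : nat) :
  -1 < l -> Gamma (INR (S k) + l + 1) = (INR k + l + 1) * Gamma (INR k + l + 1).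
Proof.
  intros Hl. rewrite S_INR. replace (INR k + 1 + l + 1) with ((INR k + l + 1) + 1) by ring.
  apply Gamma_succ. pose proof (pos_INR k). lra.
Qed.

Lemma Gamma_index_pos (l : R) (k : nat) : -1 < l -> 0 < Gamma (INR k + l + 1).
Proof. intros Hl. apply Gamma_pos. pose proof (pos_INR k). lra. Qed.

Definition Fcoef (x l : R) (k : nat) : R :=
  x ^ k / (INR (Factorial.fact k) * Gamma (INR k + l + 1)).

Definition expsum (x : R) (m : nat) : R := sum_f_R0 (fun k => x ^ k / INR (Factorial.fact k)) m.

(* Coefficients of [sum_(k >= 0) F_(l+k)], with the powers of [y] collected. *)
Definition Pcoef (x l : R) (m : nat) : R := expsum x m / Gamma (INR m + l + 1).

Definition Pmu_series (l x y : R) : R := exp (- x - y) * Rpower y l * PSeries (Pcoef x l) y.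

Lemma Fcoef_pos (x l : R) (k : nat) : 0 < x -> -1 < l -> 0 < Fcoef x l k.
Proof.
  intros Hx Hl. apply Rdiv_lt_0_compat; [now apply pow_lt |].
  apply Rmult_lt_0_compat; [apply INR_fact_pos | now apply Gamma_index_pos].
Qed.

Lemma expsum_S (x : R) (m : nat) :
  expsum x (S m) = expsum x m + x ^ S m / INR (Factorial.fact (S m)).
Proof. reflexivity. Qed.

Lemma expsum_ge_1 (x : R) (m : nat) : 0 < x -> 1 <= expsum x m.
Proof.
  intros Hx. induction m as [| m IH]; [unfold expsum; simpl; lra |].
  rewrite expsum_S.
  assert (0 < x ^ S m / INR (Factorial.fact (S m)))
    by (apply Rdiv_lt_0_compat; [apply pow_lt | apply INR_fact_pos]; auto).
  lra.
Qed.

Lemma expsum_succ_le (x : R) (m : nat) : 0 < x -> expsum x (S m) <= (1 + x) * expsum x m.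
Proof.
  intros Hx. rewrite expsum_S.
  assert (Hlast : x ^ m / INR (Factorial.fact m) <= expsum x m).
  { destruct m as [| m]; [unfold expsum; simpl; lra |]. rewrite expsum_S.
    pose proof (expsum_ge_1 x m Hx). lra. }
  assert (x ^ S m / INR (Factorial.fact (S m)) <= x * (x ^ m / INR (Factorial.fact m))); [| nra].
  rewrite fact_simpl, mult_INR. simpl pow.
  pose proof (INR_fact_pos m). pose proof (pow_lt x m Hx).
  assert (1 <= INR (S m)) by (apply (le_INR 1); lia).
  unfold Rdiv. rewrite Rinv_mult.
  assert (/ INR (S m) <= 1) by (rewrite <- Rinv_1; apply Rinv_le_contravar; lra).
  assert (0 < x * x ^ m * / INR (Factorial.fact m))
    by (apply Rmult_lt_0_compat; [nra | now apply Rinv_0_lt_compat]).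
  nra.
Qed.

Lemma Pcoef_pos (x l : R) (m : nat) : 0 < x -> -1 < l -> 0 < Pcoef x l m.
Proof.
  intros Hx Hl. apply Rdiv_lt_0_compat; [pose proof (expsum_ge_1 x m Hx); lra |].
  now apply Gamma_index_pos.
Qed.

Lemma CV_radius_Fcoef (x l : R) : 0 < x -> -1 < l -> CV_radius (Fcoef x l) = p_infty.
Proof.
  intros Hx Hl. apply (CV_radius_infinite_ratio _ (x / (l + 1))); [intros; now apply Fcoef_pos |].
  intros n. unfold Fcoef. rewrite Gamma_shift, fact_simpl, mult_INR by auto.
  pose proof (INR_fact_pos n). pose proof (pos_INR n). pose proof (Gamma_index_pos l n Hl).
  pose proof (pow_lt x n Hx). assert (0 < INR (S n)) by (apply lt_0_INR; lia).
  replace (x ^ S n / (INR (S n) * INR (Factorial.fact n) *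
                      ((INR n + l + 1) * Gamma (INR n + l + 1))))
    with (x / (INR n + l + 1) / INR (S n) *
          (x ^ n / (INR (Factorial.fact n) * Gamma (INR n + l + 1))))
    by (simpl pow; field; repeat split; lra).
  apply Rmult_le_compat_r; [left; apply Rdiv_lt_0_compat; [| apply Rmult_lt_0_compat]; auto |].
  unfold Rdiv. apply Rmult_le_compat_r; [left; now apply Rinv_0_lt_compat |].
  apply Rmult_le_compat_l; [lra | apply Rinv_le_contravar; lra].
Qed.

Lemma CV_radius_Pcoef (x l : R) : 0 < x -> 0 <= l -> CV_radius (Pcoef x l) = p_infty.
Proof.
  intros Hx Hl. apply (CV_radius_infinite_ratio _ (1 + x)); [intros; apply Pcoef_pos; lra |].
  intros n. unfold Pcoef. rewrite Gamma_shift by lra.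
  pose proof (pos_INR n). pose proof (Gamma_index_pos l n ltac:(lra)).
  pose proof (expsum_succ_le x n Hx). pose proof (expsum_ge_1 x n Hx).
  pose proof (expsum_ge_1 x (S n) Hx). rewrite S_INR.
  replace (expsum x (S n) / ((INR n + l + 1) * Gamma (INR n + l + 1)))
    with (expsum x (S n) / (INR n + l + 1) / Gamma (INR n + l + 1)) by (field; lra).
  replace ((1 + x) / (INR n + 1) * (expsum x n / Gamma (INR n + l + 1)))
    with ((1 + x) * expsum x n / (INR n + 1) / Gamma (INR n + l + 1)) by (field; lra).
  unfold Rdiv at 1 3. apply Rmult_le_compat_r; [left; now apply Rinv_0_lt_compat |].
  unfold Rdiv. apply Rmult_le_compat; [lra | left; apply Rinv_0_lt_compat; lra | lra |].
  apply Rinv_le_contravar; lra.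
Qed.

Lemma BesselI_PSeries (l x t : R) : 0 < x -> 0 < t ->
  BesselI l (2 * sqrt (x * t)) = Rpower (x * t) (l / 2) * PSeries (Fcoef x l) t.
Proof.
  intros Hx Ht. assert (Hxt : 0 < x * t) by nra.
  unfold BesselI, PSeries. rewrite <- Series_scal_l. apply Series_ext. intros k.
  replace (2 * sqrt (x * t) / 2) with (sqrt (x * t)) by field.
  rewrite <- Rpower_sqrt, Rpower_mult by auto.
  replace (/ 2 * (2 * INR k + l)) with (INR k + l / 2) by field.
  rewrite Rpower_plus, Rpower_pow by auto.
  unfold Fcoef, scal; simpl; unfold mult; simpl. rewrite Rpow_mult_distr.
  unfold Rdiv. ring.
Qed.

Lemma Fmu_PSeries (l x y : R) : 0 < x -> 0 < y ->
  Fmu l x y = exp (- x - y) * Rpower y l * PSeries (Fcoef x l) y.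
Proof.
  intros Hx Hy. unfold Fmu. rewrite BesselI_PSeries by auto.
  assert (H : Rpower (y / x) (l / 2) * Rpower (x * y) (l / 2) = Rpower y l).
  { rewrite Rpower_mult_distr by (apply Rdiv_lt_0_compat || apply Rmult_lt_0_compat; auto).
    replace (y / x * (x * y)) with (Rpower y (INR 2))
      by (rewrite Rpower_pow by auto; simpl; field; lra).
    rewrite Rpower_mult. f_equal. simpl; field. }
  rewrite <- H. ring.
Qed.

Lemma Fmu_pos (l x y : R) : 0 < x -> 0 < y -> -1 < l -> 0 < Fmu l x y.
Proof.
  intros Hx Hy Hl. rewrite Fmu_PSeries by auto.
  repeat apply Rmult_lt_0_compat; [apply exp_pos | apply Rpower_pos |].
  apply PSeries_pos; auto; [now apply CV_radius_Fcoef | intros; now apply Fcoef_pos].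
Qed.

Lemma Pmu_series_pos (l x y : R) : 0 < x -> 0 < y -> 0 <= l -> 0 < Pmu_series l x y.
Proof.
  intros Hx Hy Hl.
  repeat apply Rmult_lt_0_compat; [apply exp_pos | apply Rpower_pos |].
  apply PSeries_pos; auto; [now apply CV_radius_Pcoef | intros; apply Pcoef_pos; lra].
Qed.

Lemma Pcoef_split (x l : R) (n : nat) : 0 < l ->
  Pcoef x l n = PS_plus (Fcoef x l) (PS_incr_1 (Pcoef x (l + 1))) n.
Proof.
  intros Hl. unfold PS_plus, PS_incr_1. change (plus ?u ?v) with (u + v).
  destruct n as [| m].
  - change (@zero R_NormedModule) with 0. unfold Fcoef, Pcoef, expsum. simpl.
    pose proof (Gamma_index_pos l 0 ltac:(lra)). simpl in *. field. lra.
  - unfold Fcoef, Pcoef. rewrite expsum_S.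
    replace (INR m + (l + 1) + 1) with (INR (S m) + l + 1) by (rewrite S_INR; ring).
    pose proof (Gamma_index_pos l (S m) ltac:(lra)). pose proof (INR_fact_pos (S m)).
    field. lra.
Qed.

Lemma Pmu_series_succ (l x y : R) : 0 < x -> 0 < y -> 0 < l ->
  Pmu_series l x y = Fmu l x y + Pmu_series (l + 1) x y.
Proof.
  intros Hx Hy Hl. rewrite Fmu_PSeries by auto. unfold Pmu_series.
  rewrite (PSeries_ext _ _ y (fun n => Pcoef_split x l n Hl)).
  rewrite PSeries_plus, PSeries_incr_1.
  - rewrite Rpower_plus, Rpower_1 by auto. ring.
  - apply CV_radius_inside, Rabs_lt_CV_radius_infinite, CV_radius_Fcoef; auto; lra.
  - apply ex_pseries_incr_1, CV_radius_inside, Rabs_lt_CV_radius_infinite.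
    apply CV_radius_Pcoef; auto; lra.
Qed.

Lemma Pmu_series_tail (l x y : R) (n : nat) : 0 < x -> 0 < y -> 0 < l ->
  Pmu_series l x y = sum_f_R0 (fun k => Fmu (l + INR k) x y) n + Pmu_series (l + INR n + 1) x y.
Proof.
  intros Hx Hy Hl. induction n as [| n IH].
  - simpl. replace (l + 0) with l by ring. now apply Pmu_series_succ.
  - rewrite IH, tech5, (Pmu_series_succ (l + INR n + 1)) by (pose proof (pos_INR n); lra).
    rewrite S_INR. replace (l + (INR n + 1)) with (l + INR n + 1) by ring. ring.
Qed.

Lemma Pcoef_ode (x l : R) (n : nat) : 0 < l ->
  Fcoef x (l - 1) n = PS_plus (PS_scal l (Pcoef x l))
    (PS_plus (PS_incr_1 (PS_derive (Pcoef x l))) (PS_scal (-1) (PS_incr_1 (Pcoef x l)))) n.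
Proof.
  intros Hl. unfold PS_plus, PS_scal, PS_incr_1, PS_derive.
  repeat match goal with |- context [plus ?u ?v] => change (plus u v) with (u + v) end.
  repeat match goal with |- context [scal ?u ?v] => change (scal u v) with (u * v) end.
  repeat match goal with |- context [@zero ?T] => change (@zero T) with 0 end.
  destruct n as [| m].
  - unfold Fcoef, Pcoef, expsum. simpl.
    replace (0 + (l - 1) + 1) with l by ring. replace (0 + l + 1) with (l + 1) by ring.
    rewrite Gamma_succ by auto. pose proof (Gamma_pos l Hl). field. lra.
  - unfold Fcoef, Pcoef. rewrite expsum_S.
    pose proof (pos_INR m).
    replace (INR (S m) + (l - 1) + 1) with (INR (S m) + l) by ring.
    replace (INR m + l + 1) with (INR (S m) + l) by (rewrite S_INR; ring).
    rewrite Gamma_succ by (rewrite S_INR; lra).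
    pose proof (Gamma_pos (INR (S m) + l) ltac:(rewrite S_INR; lra)).
    pose proof (INR_fact_pos (S m)). assert (0 < INR (S m)) by (apply lt_0_INR; lia).
    rewrite !S_INR in *. field. repeat split; lra.
Qed.

Lemma PSeries_Pcoef_ode (x l t : R) : 0 < x -> 0 < l ->
  l * PSeries (Pcoef x l) t + t * PSeries (PS_derive (Pcoef x l)) t - t * PSeries (Pcoef x l) t
  = PSeries (Fcoef x (l - 1)) t.
Proof.
  intros Hx Hl. set (p := Pcoef x l).
  assert (Hr : Rbar_lt (Rabs t) (CV_radius p))
    by (apply Rabs_lt_CV_radius_infinite, CV_radius_Pcoef; auto; lra).
  assert (E1 : ex_pseries p t) by now apply CV_radius_inside.
  assert (E2 : ex_pseries (PS_derive p) t) by now apply ex_pseries_derive.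
  rewrite (PSeries_ext _ _ t (fun n => Pcoef_ode x l n Hl)). fold p.
  rewrite PSeries_plus, PSeries_plus, !PSeries_scal, !PSeries_incr_1.
  - lra.
  - now apply ex_pseries_incr_1.
  - apply ex_pseries_scal; [apply Rmult_comm | now apply ex_pseries_incr_1].
  - apply ex_pseries_scal; [apply Rmult_comm | auto].
  - apply ex_pseries_plus; [now apply ex_pseries_incr_1 |].
    apply ex_pseries_scal; [apply Rmult_comm | now apply ex_pseries_incr_1].
Qed.

Lemma is_derive_Pmu_series (l x t : R) : 0 < x -> 0 < l -> 0 < t ->
  is_derive (Pmu_series l x) t (exp (- x - t) * Rpower t (l - 1) * PSeries (Fcoef x (l - 1)) t).
Proof.
  intros Hx Hl Ht. unfold Pmu_series.
  assert (H1 : is_derive (fun u => exp (- x - u)) t (- exp (- x - t)))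
    by (auto_derive; auto; replace (- x + - t) with (- x - t) by ring; ring).
  pose proof (is_derive_mult_R _ _ _ _ _ H1 (is_derive_Rpower l t Ht)) as H12.
  pose proof (is_derive_mult_R _ _ _ _ _ H12 (is_derive_PSeries (Pcoef x l) t
    (Rabs_lt_CV_radius_infinite _ t (CV_radius_Pcoef x l Hx ltac:(lra))))) as H.
  cbv beta in H. rewrite <- PSeries_Pcoef_ode by auto.
  assert (Hpow : Rpower t l = t * Rpower t (l - 1)).
  { rewrite <- (Rpower_1 t) at 2 by auto. rewrite <- Rpower_plus. f_equal. ring. }
  rewrite Hpow in H.
  match goal with H : is_derive _ _ ?d |- is_derive _ _ ?e => replace e with d by ring end.
  exact H.
Qed.

Lemma continuous_Fmu_integrand (l x t : R) : 0 < x -> -1 < l -> 0 < t ->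
  continuous (fun u => exp (- x - u) * Rpower u l * PSeries (Fcoef x l) u) t.
Proof.
  intros Hx Hl Ht.
  apply (continuous_mult (fun u => exp (- x - u) * Rpower u l) (PSeries (Fcoef x l))).
  - apply (continuous_mult (fun u => exp (- x - u)) (fun u => Rpower u l)).
    + apply (ex_derive_continuous (fun u => exp (- x - u))). auto_derive; auto.
    + now apply continuous_Rpower.
  - apply continuity_pt_filterlim, PSeries_continuity, Rabs_lt_CV_radius_infinite.
    now apply CV_radius_Fcoef.
Qed.

Lemma lim_Pmu_series_at_right_0 (l x : R) : 0 < x -> 0 < l ->
  filterlim (Pmu_series l x) (at_right 0) (locally 0).
Proof.
  intros Hx Hl.
  apply (filterlim_ext (fun t => mult (Rpower t l) (exp (- x - t) * PSeries (Pcoef x l) t))).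
  { intros t. unfold Pmu_series, mult; simpl. ring. }
  replace 0 with (mult 0 (exp (- x - 0) * PSeries (Pcoef x l) 0)) at 2
    by (unfold mult; simpl; ring).
  apply (filterlim_comp_2 (G := locally 0) (H := locally (exp (- x - 0) * PSeries (Pcoef x l) 0))
           (fun t => Rpower t l) (fun t => exp (- x - t) * PSeries (Pcoef x l) t) mult).
  - now apply lim_Rpower_at_right_0.
  - assert (Hle : filter_le (at_right 0) (locally 0))
      by (intros P [e He]; exists e; intros y Hy _; now apply He).
    apply (filterlim_filter_le_1 _ Hle).
    apply (continuous_mult (fun u => exp (- x - u)) (PSeries (Pcoef x l))).
    + apply (ex_derive_continuous (fun u => exp (- x - u))). auto_derive; auto.
    + apply continuity_pt_filterlim, PSeries_continuity, Rabs_lt_CV_radius_infinite.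
      apply CV_radius_Pcoef; lra.
  - apply (filterlim_mult (K := R_AbsRing)).
Qed.

Lemma Pmu_integrand_eq (mu x t : R) : 0 < x -> 0 < t ->
  Rpower t ((mu - 1) / 2) * exp (- t - x) * BesselI (mu - 1) (2 * sqrt (x * t)) =
  Rpower x ((mu - 1) / 2) *
  (exp (- x - t) * Rpower t (mu - 1) * PSeries (Fcoef x (mu - 1)) t).
Proof.
  intros Hx Ht. rewrite BesselI_PSeries by auto. rewrite <- Rpower_mult_distr by auto.
  replace (- t - x) with (- x - t) by ring.
  replace (Rpower t (mu - 1)) with (Rpower t ((mu - 1) / 2) * Rpower t ((mu - 1) / 2))
    by (rewrite <- Rpower_plus; f_equal; field).
  ring.
Qed.

Lemma Pmu_eq_series (mu x y : R) : 0 < mu -> 0 < x -> 0 < y -> Pmu mu x y = Pmu_series mu x y.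
Proof.
  intros Hmu Hx Hy. set (c := Rpower x ((mu - 1) / 2)).
  assert (HI : is_RInt_gen
    (fun t => c * (exp (- x - t) * Rpower t (mu - 1) * PSeries (Fcoef x (mu - 1)) t))
    (at_right 0) (at_point y) (c * Pmu_series mu x y - c * 0)).
  { apply (is_RInt_gen_primitive (fun t => c * Pmu_series mu x t) _ (at_point y)).
    - exact Hy.
    - intros t Ht. apply (is_derive_scal (Pmu_series mu x)). now apply is_derive_Pmu_series.
    - intros t Ht. apply (continuous_scal_r c (fun u => _ * _ * _)).
      apply continuous_Fmu_integrand; auto; lra.
    - apply (filterlim_comp _ _ _ _ (fun v => c * v) _ (locally 0));
        [now apply lim_Pmu_series_at_right_0 |].
      apply (continuous_mult (fun _ => c) (fun v => v));
        [apply continuous_const | apply continuous_id].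
    - intros P HP. exact (locally_singleton _ _ HP). }
  assert (HJ : is_RInt_gen
    (fun t => Rpower t ((mu - 1) / 2) * exp (- t - x) * BesselI (mu - 1) (2 * sqrt (x * t)))
    (at_right 0) (at_point y) (c * Pmu_series mu x y - c * 0)).
  { refine (is_RInt_gen_ext _ _ _ _ HI).
    apply filter_prod_at_right_0; [exact Hy |]. intros a b Ha Hb t Ht; simpl in Ht.
    pose proof (Rmin_pos a b Ha Hb). symmetry. apply Pmu_integrand_eq; lra. }
  unfold Pmu. rewrite (is_RInt_gen_unique _ _ HJ). unfold c.
  rewrite Rmult_0_r, Rminus_0_r, <- Rmult_assoc, <- Rpower_plus.
  replace ((1 - mu) / 2 + (mu - 1) / 2) with 0 by field. rewrite Rpower_O by auto. ring.
Qed.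

(** * Monotonicity of P_l / F_l *)

Definition expsum_ratio (x : R) (r : nat) : R := expsum x r * INR (Factorial.fact r) / x ^ r.

Lemma expsum_ratio_S (x : R) (r : nat) :
  0 < x -> expsum_ratio x (S r) = expsum_ratio x r * INR (S r) / x + 1.
Proof.
  intros Hx. unfold expsum_ratio. rewrite expsum_S, fact_simpl, mult_INR. simpl pow.
  pose proof (INR_fact_pos r). assert (0 < INR (S r)) by (apply lt_0_INR; lia).
  pose proof (pow_lt x r Hx). field. repeat split; lra.
Qed.

Lemma expsum_ratio_pos (x : R) (r : nat) : 0 < x -> 0 < expsum_ratio x r.
Proof.
  intros Hx. apply Rdiv_lt_0_compat; [| now apply pow_lt].
  pose proof (expsum_ge_1 x r Hx). pose proof (INR_fact_pos r). nra.
Qed.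

Lemma expsum_ratio_incr (x : R) (r : nat) : 0 < x -> expsum_ratio x r <= expsum_ratio x (S r).
Proof.
  intros Hx. induction r as [| r IH].
  - rewrite expsum_ratio_S by auto.
    assert (expsum_ratio x 0 = 1) as -> by (unfold expsum_ratio, expsum; simpl; field).
    assert (0 < 1 * INR 1 / x) by (simpl; apply Rdiv_lt_0_compat; lra). lra.
  - pose proof (expsum_ratio_pos x r Hx). pose proof (pos_INR r).
    assert (Hb : expsum_ratio x (S r) = expsum_ratio x r * INR (S r) / x + 1)
      by (apply expsum_ratio_S; auto).
    rewrite (expsum_ratio_S x (S r)) by auto.
    set (a := expsum_ratio x r) in *. set (b := expsum_ratio x (S r)) in *.
    rewrite Hb at 1. rewrite !S_INR.
    assert (a * (INR r + 1) / x <= b * (INR r + 1 + 1) / x); [| lra].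
    unfold Rdiv. apply Rmult_le_compat_r; [left; now apply Rinv_0_lt_compat | nra].
Qed.

Lemma expsum_cross_le (x : R) (p r : nat) : 0 < x -> (p <= r)%nat ->
  expsum x p * (x ^ r / INR (Factorial.fact r)) <= expsum x r * (x ^ p / INR (Factorial.fact p)).
Proof.
  intros Hx Hpr.
  assert (Hmono : expsum_ratio x p <= expsum_ratio x r).
  { induction Hpr as [| r Hpr IH]; [lra |]. pose proof (expsum_ratio_incr x r Hx). lra. }
  unfold expsum_ratio in Hmono.
  pose proof (INR_fact_pos r). pose proof (INR_fact_pos p).
  pose proof (pow_lt x r Hx). pose proof (pow_lt x p Hx).
  set (K := x ^ p * x ^ r / (INR (Factorial.fact p) * INR (Factorial.fact r))).
  assert (0 < K) by (apply Rdiv_lt_0_compat; apply Rmult_lt_0_compat; auto).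
  apply (Rmult_le_compat_r K) in Hmono; [| lra]. unfold K in Hmono.
  replace (expsum x p * (x ^ r / INR (Factorial.fact r))) with
    (expsum x p * INR (Factorial.fact p) / x ^ p * K) by (unfold K; field; repeat split; lra).
  replace (expsum x r * (x ^ p / INR (Factorial.fact p))) with
    (expsum x r * INR (Factorial.fact r) / x ^ r * K) by (unfold K; field; repeat split; lra).
  exact Hmono.
Qed.

(* Coefficient of [y^(i+j)] in [P_l F_(l+1) - P_(l+1) F_l], for a fixed split [i + j]. *)
Definition cross_coef (x l : R) (i j : nat) : R :=
  Pcoef x l i * Fcoef x (l + 1) j - Pcoef x (l + 1) i * Fcoef x l j.

Lemma cross_coef_eq (x l : R) (i j : nat) : 0 < l ->
  cross_coef x l i j = (INR i - INR j) * (expsum x i * (x ^ j / INR (Factorial.fact j)))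
                       / (Gamma (INR i + l + 2) * Gamma (INR j + l + 2)).
Proof.
  intros Hl. unfold cross_coef, Pcoef, Fcoef.
  replace (INR i + (l + 1) + 1) with (INR i + l + 2) by ring.
  replace (INR j + (l + 1) + 1) with (INR j + l + 2) by ring.
  replace (INR i + l + 2) with ((INR i + l + 1) + 1) by ring.
  replace (INR j + l + 2) with ((INR j + l + 1) + 1) by ring.
  pose proof (pos_INR i). pose proof (pos_INR j). pose proof (INR_fact_pos j).
  rewrite (Gamma_succ (INR i + l + 1)), (Gamma_succ (INR j + l + 1)) by lra.
  pose proof (Gamma_index_pos l i ltac:(lra)). pose proof (Gamma_index_pos l j ltac:(lra)).
  field. repeat split; lra.
Qed.

Lemma cross_coef_sym_nonneg (x l : R) (i j : nat) :
  0 < x -> 0 < l -> 0 <= cross_coef x l i j + cross_coef x l j i.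
Proof.
  intros Hx Hl. rewrite !cross_coef_eq by auto.
  pose proof (Gamma_pos (INR i + l + 2) ltac:(pose proof (pos_INR i); lra)).
  pose proof (Gamma_pos (INR j + l + 2) ltac:(pose proof (pos_INR j); lra)).
  pose proof (INR_fact_pos i). pose proof (INR_fact_pos j).
  set (ei := expsum x i * (x ^ j / INR (Factorial.fact j))).
  set (ej := expsum x j * (x ^ i / INR (Factorial.fact i))).
  replace ((INR i - INR j) * ei / (Gamma (INR i + l + 2) * Gamma (INR j + l + 2)) +
           (INR j - INR i) * ej / (Gamma (INR j + l + 2) * Gamma (INR i + l + 2)))
    with ((INR i - INR j) * (ei - ej) / (Gamma (INR i + l + 2) * Gamma (INR j + l + 2)))
    by (field; lra).
  apply Rdiv_le_0_compat; [| apply Rmult_lt_0_compat; auto].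
  destruct (Nat.le_gt_cases j i) as [Hji | Hij].
  - pose proof (expsum_cross_le x j i Hx Hji). apply le_INR in Hji.
    apply Rmult_le_pos; unfold ei, ej; lra.
  - pose proof (expsum_cross_le x i j Hx (Nat.lt_le_incl _ _ Hij)). apply lt_INR in Hij.
    unfold ei, ej. nra.
Qed.

Lemma PSeries_cross_lt (x l y : R) : 0 < x -> 0 < y -> 0 < l ->
  PSeries (Pcoef x (l + 1)) y * PSeries (Fcoef x l) y <
  PSeries (Pcoef x l) y * PSeries (Fcoef x (l + 1)) y.
Proof.
  intros Hx Hy Hl.
  assert (Hrad : forall a, CV_radius a = p_infty -> Rbar_lt (Rabs y) (CV_radius a))
    by (intros; now apply Rabs_lt_CV_radius_infinite).
  assert (R0 : CV_radius (Pcoef x l) = p_infty) by (apply CV_radius_Pcoef; lra).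
  assert (R1 : CV_radius (Pcoef x (l + 1)) = p_infty) by (apply CV_radius_Pcoef; lra).
  assert (R2 : CV_radius (Fcoef x l) = p_infty) by (apply CV_radius_Fcoef; lra).
  assert (R3 : CV_radius (Fcoef x (l + 1)) = p_infty) by (apply CV_radius_Fcoef; lra).
  set (c := fun n => PS_mult (Pcoef x l) (Fcoef x (l + 1)) n
                     - PS_mult (Pcoef x (l + 1)) (Fcoef x l) n).
  assert (Hc : forall n, 0 <= c n).
  { intros n. unfold c, PS_mult. rewrite <- minus_sum.
    exact (sum_antidiagonal_nonneg (cross_coef x l) n
             (fun i j => cross_coef_sym_nonneg x l i j Hx Hl)). }
  assert (Hc1 : 0 < c 1%nat).
  { unfold c, PS_mult. rewrite <- minus_sum. simpl.
    fold (cross_coef x l 0 1) (cross_coef x l 1 0). rewrite !cross_coef_eq by auto.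
    unfold expsum; simpl.
    pose proof (Gamma_pos (0 + l + 2) ltac:(lra)). pose proof (Gamma_pos (1 + l + 2) ltac:(lra)).
    match goal with |- 0 < ?e => replace e with (1 / (Gamma (0 + l + 2) * Gamma (1 + l + 2)))
      by (field; split; lra) end.
    apply Rdiv_lt_0_compat; [lra | now apply Rmult_lt_0_compat]. }
  apply Rminus_gt_0_lt.
  rewrite <- !PSeries_mult, <- PSeries_minus by (auto || apply ex_pseries_mult; auto).
  apply (Rlt_le_trans _ (sum_f_R0 (fun k => c k * y ^ k) 1)).
  - simpl. pose proof (Hc 0%nat). pose proof (Rmult_lt_0_compat _ _ Hc1 Hy). nra.
  - apply PSeries_partial_le; [| lra | auto].
    apply ex_pseries_minus; apply ex_pseries_mult; auto.
Qed.

Lemma Pmu_series_cross_lt (l x y : R) : 0 < x -> 0 < y -> 0 < l ->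
  Pmu_series (l + 1) x y * Fmu l x y < Pmu_series l x y * Fmu (l + 1) x y.
Proof.
  intros Hx Hy Hl. rewrite !Fmu_PSeries by auto. unfold Pmu_series.
  pose proof (PSeries_cross_lt x l y Hx Hy Hl).
  set (K := exp (- x - y) * exp (- x - y) * Rpower y l * Rpower y (l + 1)).
  assert (0 < K) by (repeat apply Rmult_lt_0_compat; apply exp_pos).
  match goal with |- ?u < ?v =>
    replace u with (K * (PSeries (Pcoef x (l + 1)) y * PSeries (Fcoef x l) y)) by (unfold K; ring);
    replace v with (K * (PSeries (Pcoef x l) y * PSeries (Fcoef x (l + 1)) y)) by (unfold K; ring)
  end.
  now apply Rmult_lt_compat_l.
Qed.

Lemma Pmu_series_ratio_lt (nu x y : R) (q : nat) : 0 < x -> 0 < y -> 0 < nu ->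
  Pmu_series (nu + INR q + 1) x y / Fmu (nu + INR q + 1) x y < Pmu_series nu x y / Fmu nu x y.
Proof.
  intros Hx Hy Hnu.
  assert (Hstep : forall l, 0 < l ->
            Pmu_series (l + 1) x y / Fmu (l + 1) x y < Pmu_series l x y / Fmu l x y).
  { intros l Hl. pose proof (Fmu_pos l x y Hx Hy ltac:(lra)).
    pose proof (Fmu_pos (l + 1) x y Hx Hy ltac:(lra)).
    apply (Rmult_lt_reg_r (Fmu l x y * Fmu (l + 1) x y)); [now apply Rmult_lt_0_compat |].
    replace (Pmu_series (l + 1) x y / Fmu (l + 1) x y * (Fmu l x y * Fmu (l + 1) x y))
      with (Pmu_series (l + 1) x y * Fmu l x y) by (field; lra).
    replace (Pmu_series l x y / Fmu l x y * (Fmu l x y * Fmu (l + 1) x y))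
      with (Pmu_series l x y * Fmu (l + 1) x y) by (field; lra).
    now apply Pmu_series_cross_lt. }
  induction q as [| q IH].
  - simpl. replace (nu + 0 + 1) with (nu + 1) by ring. now apply Hstep.
  - rewrite S_INR. replace (nu + (INR q + 1) + 1) with ((nu + INR q + 1) + 1) by ring.
    pose proof (pos_INR q). pose proof (Hstep (nu + INR q + 1) ltac:(lra)). lra.
Qed.

Theorem proposition4 (mu x y : R) (n q : nat) :
  0 < mu -> 0 < x -> 0 < y ->
  sum_f_R0 (fun k => Fmu (mu + INR k) x y) n < Pmu mu x y /\
  (Fmu (mu + INR n + 1) x y > Fmu (mu + INR n + INR q + 2) x y ->
   Pmu mu x y < sum_f_R0 (fun k => Fmu (mu + INR k) x y) n + Uq q (mu + INR n + 1) x y).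
Proof.
  intros Hmu Hx Hy. rewrite Pmu_eq_series, (Pmu_series_tail mu x y n) by auto.
  set (nu := mu + INR n + 1). assert (Hnu : 0 < nu) by (unfold nu; pose proof (pos_INR n); lra).
  split; [pose proof (Pmu_series_pos nu x y Hx Hy ltac:(lra)); lra |].
  intros Hgt. apply Rplus_lt_compat_l. unfold Uq.
  replace (mu + INR n + INR q + 2) with (nu + INR q + 1) in Hgt by (unfold nu; ring).
  pose proof (Pmu_series_tail nu x y q Hx Hy Hnu) as Htail.
  pose proof (Pmu_series_ratio_lt nu x y q Hx Hy Hnu) as Hratio.
  pose proof (Fmu_pos (nu + INR q + 1) x y Hx Hy ltac:(pose proof (pos_INR q); lra)).
  set (A := sum_f_R0 (fun k => Fmu (nu + INR k) x y) q) in *.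
  set (Fn := Fmu nu x y) in *. set (Fq := Fmu (nu + INR q + 1) x y) in *.
  set (Sn := Pmu_series nu x y) in *. set (Sq := Pmu_series (nu + INR q + 1) x y) in *.
  apply (Rmult_lt_reg_r (Fn - Fq)); [lra |].
  replace (A / (Fn - Fq) * Fn * (Fn - Fq)) with (A * Fn) by (field; lra).
  apply (Rmult_lt_compat_r (Fn * Fq)) in Hratio; [| nra].
  replace (Sq / Fq * (Fn * Fq)) with (Sq * Fn) in Hratio by (field; lra).
  replace (Sn / Fn * (Fn * Fq)) with (Sn * Fq) in Hratio by (field; lra).
  nra.
Qed.
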